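(* Let $n\geq 1$. Let $T_n$ be the set of triply rooted trees on $[n]=\{1,\dots,n\}$, and let $Q_n$ be the set of triples $(D,D',D'')$ of doubly rooted trees such that the vertex sets of $D$, $D'$, $D''$ form a composition of $[n]$ and $D$ is nonempty. Then there is a bijection between $Q_n$ and $T_n$.
   Context: A doubly rooted tree on a finite set $S$ is a labeled tree with vertex set $S$ together with two distinguished vertices $r_1$ (the first root) and $r_2$ (the second root), not necessarily distinct. A triply rooted tree on $S$ is a labeled tree with vertex set $S$ together with three distinguished vertices $r_1,r_2,r_3$ (first, second, third root), not necessarily distinct. The empty doubly rooted tree (on the empty vertex set) is allowed. A triple $(X,Y,Z)$ of subsets of a set $S$ is a composition of $S$ if $X,Y,Z$ are pairwise disjoint and $X\cup Y\cup Z=S$ (some of them may be empty). *)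

From mathcomp Require Import all_boot.
Set Implicit Arguments. Unset Strict Implicit. Unset Printing Implicit Defensive.

Section Trees.
Variable n : nat.

Definition adj (E : {set {set 'I_n}}) : rel 'I_n :=
  fun x y => [set x; y] \in E.

Definition is_graph_on (S : {set 'I_n}) (E : {set {set 'I_n}}) : bool :=
  [forall e in E, (e \subset S) && (#|e| == 2)].

Definition connected_on (S : {set 'I_n}) (E : {set {set 'I_n}}) : Prop :=
  forall x y, x \in S -> y \in S -> connect (adj E) x y.

Definition acyclic (E : {set {set 'I_n}}) : Prop :=
  ~ exists s : seq 'I_n, [&& uniq s, 2 < size s & cycle (adj E) s].

(* a (labeled) tree with vertex set S and edge set E: connected acyclic graph;
   the empty vertex set gives the empty tree *)
Definition is_tree (S : {set 'I_n}) (E : {set {set 'I_n}}) : Prop :=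
  [/\ is_graph_on S E, connected_on S E & acyclic E].

(* raw doubly rooted tree: (vertex set, edge set, roots (r1, r2));
   roots are None exactly for the empty tree *)
Definition DRT_raw : Type :=
  ({set 'I_n} * {set {set 'I_n}} * option ('I_n * 'I_n))%type.

Definition drt_vertices (D : DRT_raw) : {set 'I_n} := D.1.1.

Definition valid_drt (D : DRT_raw) : Prop :=
  let: (V, E, r) := D in
  is_tree V E /\
  match r with
  | None => V = set0
  | Some (r1, r2) => r1 \in V /\ r2 \in V
  end.

Definition Qn_pred (q : DRT_raw * DRT_raw * DRT_raw) : Prop :=
  let: (D, D', D'') := q in
  [/\ valid_drt D, valid_drt D', valid_drt D'',
      [/\ [disjoint drt_vertices D & drt_vertices D'],
          [disjoint drt_vertices D & drt_vertices D''],
          [disjoint drt_vertices D' & drt_vertices D''] &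
          drt_vertices D :|: drt_vertices D' :|: drt_vertices D'' = [set: 'I_n]]
      & drt_vertices D != set0].

Definition Qn : Type := {q : DRT_raw * DRT_raw * DRT_raw | Qn_pred q}.

Definition Tn : Type :=
  {t : {set {set 'I_n}} * 'I_n * 'I_n * 'I_n | is_tree [set: 'I_n] t.1.1.1}.

End Trees.

From mathcomp Require Import all_boot zify.
From Stdlib Require Import ProofIrrelevance.
Set Implicit Arguments. Unset Strict Implicit. Unset Printing Implicit Defensive.

(* Given (D, D', D'') with D rooted at (a1, a2), hang D' and D'' from a1, each by an
   edge from a1 to its second root.  This yields a tree on [n] rooted at the first
   roots of D' and D'' (a1 for an empty one) and a2.  Conversely, a1 is the median of
   these three roots: the only vertex whose removal separates them pairwise.  So a1
   is recovered from the tree, D' and D'' are the components of the tree minus a1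
   that contain the first two roots, and D is what remains. *)

Section Connect.
Variables (T : finType) (e e' : rel T).

Lemma connect_preserved (P : T -> Prop) x y :
  (forall a b, P a -> e a b -> P b) -> P x -> connect e x y -> P y.
Proof.
move=> eP Px /connectP [p ep ->]; elim: p x Px ep => //= z p IHp x Px /andP [exz ep].
exact: IHp (eP _ _ Px exz) ep.
Qed.

Lemma connect_sub_on (P : T -> Prop) x y :
  (forall a b, P a -> e a b -> P b /\ e' a b) -> P x -> connect e x y -> connect e' x y.
Proof.
move=> ee' Px cxy.
suff [] : P y /\ connect e' x y by [].
apply: (connect_preserved (P := fun z => P z /\ connect e' x z)) cxy; last first.
  by split; last exact: connect0.
move=> a b [Pa cxa] eab; have [Pb e'ab] := ee' a b Pa eab.
by split; last exact: connect_trans cxa (connect1 e'ab).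
Qed.

Lemma connect_mono : subrel e e' -> subrel (connect e) (connect e').
Proof. by move=> ee'; apply: connect_sub => a b /ee' /connect1. Qed.

End Connect.

Lemma connect_homo (T T' : finType) (e : rel T) (e' : rel T') (f : T -> T') x y :
  (forall a b, e a b -> f a = f b \/ e' (f a) (f b)) ->
  connect e x y -> connect e' (f x) (f y).
Proof.
move=> ef; apply: (connect_preserved (P := fun z => connect e' (f x) (f z))).
  by move=> a b cxa /ef [<- | /connect1 /(connect_trans cxa)].
exact: connect0.
Qed.

Section Graphs.
Variable n : nat.
Implicit Types (E F : {set {set 'I_n}}) (S C V : {set 'I_n}) (m r w : 'I_n).

Definition avoid E (w : 'I_n) := [set e in E | w \notin e].
Definition induced E S := [set e in E | e \subset S].

Lemma adj_sym E : symmetric (adj E).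
Proof. by move=> x y; rewrite /adj setUC. Qed.

Lemma connect_adjC E x y : connect (adj E) x y = connect (adj E) y x.
Proof. exact: sym_connect_sym (adj_sym E) x y. Qed.

Lemma adj_mono E F : E \subset F -> subrel (adj E) (adj F).
Proof. by move=> sEF x y; apply: (subsetP sEF). Qed.

Lemma induced_sub E S : induced E S \subset E.
Proof. by apply/subsetP => e; rewrite inE => /andP []. Qed.

Lemma adj_avoid E w x y : adj (avoid E w) x y = adj E x y && (x != w) && (y != w).
Proof. by rewrite /adj inE !inE negb_or -andbA (eq_sym w) (eq_sym w y). Qed.

Lemma graph_edgeP S E e : is_graph_on S E -> e \in E -> e \subset S /\ #|e| = 2.
Proof. by move=> /forallP /(_ e) /implyP gE /gE /andP [-> /eqP]. Qed.

Lemma adj_neq S E x y : is_graph_on S E -> adj E x y -> x != y.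
Proof. by move=> gE /(graph_edgeP gE) [_]; rewrite cards2; case: (x != y). Qed.

Lemma adj_mem S E x y : is_graph_on S E -> adj E x y -> (x \in S) && (y \in S).
Proof.
by move=> gE /(graph_edgeP gE) [/subsetP sS _]; rewrite !sS // !inE eqxx ?orbT.
Qed.

Lemma tree_set0 E : is_tree set0 E -> E = set0.
Proof.
case=> gE _ _; apply/setP => e; rewrite inE; apply/negP => eE.
by have [] := graph_edgeP gE eE; rewrite subset0 => /eqP ->; rewrite cards0.
Qed.

Lemma avoid_isolated E w x : connect (adj (avoid E w)) w x -> x = w.
Proof. by case/connectP => -[|y p] //= /andP []; rewrite adj_avoid eqxx andbF. Qed.

Definition all_bridges E :=
  forall x y, [set x; y] \in E -> ~~ connect (adj (E :\ [set x; y])) x y.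

Lemma acyclic_all_bridges S E : is_graph_on S E -> acyclic E -> all_bridges E.
Proof.
move=> gE acE x y xyE; apply/negP => /connectP [p pxy lp].
have xy : x != y by apply: (adj_neq gE).
move: lp; case/shortenP: pxy => p' pxy' up' _ lp'.
case: p' pxy' up' lp' => [|z [|z' q]] /= pxy' up' lp'.
- by rewrite lp' eqxx in xy.
- by move: pxy'; rewrite -lp' andbT /adj !inE eqxx.
apply: acE; exists [:: x, z, z' & q]; apply/and3P; split => //; rewrite /cycle rcons_path.
apply/andP; split; first by apply: (sub_path (adj_mono (subD1set E [set x; y]))); exact: pxy'.
by rewrite /= -lp' adj_sym.
Qed.

Lemma path_off_edge E (e : {set 'I_n}) a b t : t != [::] -> all [predC e] t ->
  path (adj E) a (rcons t b) -> path (adj (E :\ e)) a (rcons t b).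
Proof.
elim: t a => // z t IHt a _ /= /andP [ze te] /andP [eaz pt].
have ne c : [set c; z] != e by apply: contraNneq ze => <-; rewrite !inE eqxx orbT.
have -> /= : adj (E :\ e) a z by rewrite /adj in_setD1 ne.
case: t IHt te pt => [|w t] IHt te pt; last exact: IHt.
by move: pt => /= /andP [ezb _]; rewrite andbT /adj in_setD1 setUC ne; rewrite adj_sym in ezb.
Qed.

Lemma all_bridges_acyclic E : all_bridges E -> acyclic E.
Proof.
move=> brE [[|x [|y t]] //= /and3P [us st /andP [exy pt]]].
apply/negP: (brE x y exy); rewrite negbK connect_adjC.
apply/connectP; exists (rcons t x); last by rewrite last_rcons.
apply: path_off_edge => //; first by case: t st {us pt}.
move: us; rewrite !inE !negb_or => /andP [/andP [_ xt] /andP [yt _]].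
apply/allP => z zt; rewrite !inE negb_or.
by apply/andP; split; [apply: contraNneq xt | apply: contraNneq yt] => <-.
Qed.

Lemma connect_first_step E w x : connect (adj E) w x -> x != w ->
  exists2 y, adj E w y & connect (adj (avoid E w)) y x.
Proof.
move=> /connectP [p pwx lp] xw; move: lp.
case/shortenP: pwx => -[|y q] /= pwq uq _ lq; first by rewrite lq eqxx in xw.
case/andP: pwq => wy pyq; exists y => //; apply/connectP; exists q => //.
apply: (@sub_in_path _ (predC1 w) (adj E)) pyq.
  by move=> a b aw bw abE; rewrite adj_avoid abE; apply/andP; split; [exact: aw | exact: bw].
by case/andP: uq => wq _; apply/allP => c cq; rewrite inE; apply: contraNneq wq => <-.
Qed.

Lemma acyclic_neighbor_unique S E w y z : is_graph_on S E -> acyclic E ->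
  adj E w y -> adj E w z -> connect (adj (avoid E w)) y z -> y = z.
Proof.
move=> gE acE wyE wzE cyz; apply/eqP/negPn/negP => yz.
apply: (negP (acyclic_all_bridges gE acE wyE)).
apply: (@connect_trans _ _ z).
  apply: connect1; rewrite /adj in wzE *; rewrite in_setD1 wzE andbT.
  apply: contra yz => /eqP wzy.
  have : z \in [set w; y] by rewrite -wzy !inE eqxx orbT.
  rewrite !inE => /orP [/eqP zw | /eqP -> //].
  by have := adj_neq gE wzE; rewrite zw eqxx.
rewrite connect_adjC; apply: connect_mono cyz => a b.
rewrite adj_avoid => /andP [/andP [abE aw] bw].
rewrite /adj in abE *; rewrite in_setD1 abE andbT.
apply: contra aw => /eqP abwy.
have : w \in [set a; b] by rewrite abwy !inE eqxx.
by rewrite !inE => /orP [/eqP -> | /eqP wb] //; rewrite wb eqxx in bw.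
Qed.

Lemma glue_bridge S1 S2 E1 E2 u v a b : [disjoint S1 & S2] -> is_tree S1 E1 ->
  is_graph_on S2 E2 -> u \in S1 -> v \in S2 -> [set a; b] \in E1 ->
  ~~ connect (adj ((E1 :|: E2 :|: [set [set u; v]]) :\ [set a; b])) a b.
Proof.
move=> dS [gE1 _ acE1] gE2 uS1 vS2 abE1.
have /andP [aS1 bS1] := adj_mem gE1 abE1.
apply: contraNN (acyclic_all_bridges gE1 acE1 abE1) => cab.
have := connect_homo (f := fun z => if z \in S1 then z else u)
  (e' := adj (E1 :\ [set a; b])) _ cab.
rewrite aS1 bS1; apply=> p q; rewrite /adj !inE => /andP [ne /orP [/orP [pqE1|pqE2]|/eqP pquv]].
- by have /andP [-> ->] := adj_mem gE1 pqE1; right; rewrite ne.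
- have /andP [pS2 qS2] := adj_mem gE2 pqE2.
  by left; rewrite (disjointFl dS pS2) (disjointFl dS qS2).
- have vS1 : v \in S1 = false by apply: (disjointFl dS).
  have : p \in [set u; v] /\ q \in [set u; v] by rewrite -pquv !inE !eqxx ?orbT.
  by rewrite !inE => -[/orP [/eqP ->|/eqP ->] /orP [/eqP ->|/eqP ->]]; left; rewrite ?uS1 ?vS1.
Qed.

Lemma glue_tree S1 S2 E1 E2 u v : [disjoint S1 & S2] -> is_tree S1 E1 ->
  is_tree S2 E2 -> u \in S1 -> v \in S2 ->
  is_tree (S1 :|: S2) (E1 :|: E2 :|: [set [set u; v]]).
Proof.
move=> dS t1 t2 uS1 vS2; have [gE1 cE1 acE1] := t1; have [gE2 cE2 acE2] := t2.
have vS1 : v \in S1 = false by apply: (disjointFl dS).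
have uv : u != v by apply: contraTneq vS2 => <-; rewrite (disjointFr dS uS1).
set E := E1 :|: E2 :|: _.
have sE1 : E1 \subset E by rewrite /E -setUA subsetUl.
have sE2 : E2 \subset E by rewrite /E -setUA setUCA subsetUl.
split.
- apply/forallP => e; apply/implyP; rewrite !inE => /orP [/orP [eE1|eE2]|/eqP ->].
  + by have [se ->] := graph_edgeP gE1 eE1; rewrite eqxx (subset_trans se (subsetUl _ _)).
  + by have [se ->] := graph_edgeP gE2 eE2; rewrite eqxx (subset_trans se (subsetUr _ _)).
  + by rewrite cards2 uv andbT subUset !sub1set !inE uS1 vS2 orbT.
- have c12 x y : x \in S1 -> y \in S2 -> connect (adj E) x y.
    move=> xS1 yS2; apply: (@connect_trans _ _ u).
      exact: connect_mono (adj_mono sE1) _ _ (cE1 _ _ xS1 uS1).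
    apply: (@connect_trans _ _ v); first by apply: connect1; rewrite /adj !inE eqxx orbT.
    exact: connect_mono (adj_mono sE2) _ _ (cE2 _ _ vS2 yS2).
  move=> x y; rewrite !inE => /orP [xS1|xS2] /orP [yS1|yS2].
  + exact: connect_mono (adj_mono sE1) _ _ (cE1 _ _ xS1 yS1).
  + exact: c12.
  + by rewrite connect_adjC; apply: c12.
  + exact: connect_mono (adj_mono sE2) _ _ (cE2 _ _ xS2 yS2).
- apply: all_bridges_acyclic => a b; rewrite !inE => /orP [/orP [abE1|abE2]|/eqP abuv].
  + exact: glue_bridge dS t1 gE2 uS1 vS2 abE1.
  + have -> : E = E2 :|: E1 :|: [set [set v; u]] by rewrite /E (setUC E1) (setUC [set v]).
    by apply: glue_bridge t2 gE1 vS2 uS1 abE2; rewrite disjoint_sym.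
  + apply/negP => cab.
    have ab : a != b by move: (cards2 a b); rewrite abuv cards2 uv; case: (a != b).
    have /andP [aUV bUV] : (a \in [set u; v]) && (b \in [set u; v]).
      by rewrite -abuv !inE !eqxx orbT.
    have : (b \in S1) = (a \in S1).
      apply: (connect_preserved (P := fun z => (z \in S1) = (a \in S1))) cab => //.
      move=> p q pa; rewrite /adj in_setD1 abuv !inE => /andP [pq].
      rewrite (negbTE pq) orbF -pa => /orP [pqE1|pqE2].
        by have /andP [-> ->] := adj_mem gE1 pqE1.
      have /andP [pS2 qS2] := adj_mem gE2 pqE2.
      by rewrite (disjointFl dS pS2) (disjointFl dS qS2).
    move: aUV bUV ab; rewrite !inE => /orP [/eqP->|/eqP->] /orP [/eqP->|/eqP->];
    by rewrite ?eqxx ?uS1 ?vS1.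
Qed.

(** * Medians *)

(* [w] lies on the tree path from [x] to [y]. *)
Definition on_path E w x y := [|| x == w, y == w | ~~ connect (adj (avoid E w)) x y].

Definition median E x y z w := [&& on_path E w x y, on_path E w x z & on_path E w y z].

Definition side E w r := [set x | (x == w) || connect (adj (avoid E w)) x r].

Section MedianStep.
Variables (E : {set {set 'I_n}}) (r w y : 'I_n).
Hypotheses (tE : is_tree [set: 'I_n] E) (wyE : adj E w y)
  (yr : ~~ connect (adj (avoid E w)) y r).

Let yw : y != w.
Proof. by rewrite eq_sym; case: tE => gE _ _; apply: (adj_neq gE wyE). Qed.

Lemma avoid_step_connect x : connect (adj (avoid E w)) x r -> connect (adj (avoid E y)) x r.
Proof.
move=> cxr; apply: (connect_sub_on (P := fun z => connect (adj (avoid E w)) z r) _ cxr cxr).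
move=> a b car; rewrite !adj_avoid => /andP [/andP [abE aw] bw].
have cbr : connect (adj (avoid E w)) b r.
  by apply: connect_trans _ car; apply: connect1; rewrite adj_sym adj_avoid abE aw bw.
split=> //; rewrite abE /=; apply/andP; split; apply: contraNneq yr => <- //.
Qed.

Lemma avoid_step_connect_root : connect (adj (avoid E y)) w r.
Proof.
have [gE cE _] := tE.
have [<- | rw] := eqVneq r w; first exact: connect0.
have [z wzE czr] := connect_first_step (cE w r (in_setT _) (in_setT _)) rw.
apply: (@connect_trans _ _ z); last exact: avoid_step_connect.
apply: connect1; rewrite adj_avoid wzE eq_sym yw; apply: contraNneq yr => <-.
exact: czr.
Qed.

Lemma side_step_proper : side E w r \proper side E y r.
Proof.
apply/properP; split.
  apply/subsetP => x; rewrite !inE => /orP [/eqP -> | cxr]; apply/orP; right.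
    exact: avoid_step_connect_root.
  exact: avoid_step_connect.
by exists y; rewrite !inE ?eqxx // negb_or yw.
Qed.

Lemma on_path_step x : connect (adj (avoid E w)) y x -> on_path E y r x.
Proof.
have [gE _ acE] := tE.
move=> cyx; rewrite /on_path; have [// | ry] := eqVneq r y; have [// | xy] /= := eqVneq x y.
apply/negP => crx.
have [z yzE czx] := connect_first_step cyx xy.
move: yzE; rewrite adj_avoid => /andP [/andP [yzE _] zw].
suff wz : w = z by rewrite wz eqxx in zw.
apply: (acyclic_neighbor_unique gE acE _ yzE); first by rewrite adj_sym.
apply: connect_trans avoid_step_connect_root _; apply: connect_trans crx _.
rewrite connect_adjC; apply: connect_mono czx; apply: adj_mono.
by apply/subsetP => e; rewrite !inE => /andP [/andP [-> _] ->].
Qed.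

End MedianStep.

Lemma median_exists E x y z : is_tree [set: 'I_n] E -> exists w, median E x y z w.
Proof.
move=> tE; have [gE cE _] := tE.
(* Walk from x towards y and z; the side of x strictly grows at each step. *)
suff ind k w : n - #|side E w x| < k -> on_path E w x y -> on_path E w x z ->
    exists m, median E x y z m.
  by apply: (ind n.+1 x); rewrite ?ltnS ?leq_subr // /on_path eqxx.
elim: k w => // k IHk w lt_k wxy wxz.
have [wyz | /norP [yw /norP [zw /negbNE cyz]]] := boolP (on_path E w y z).
  by exists w; rewrite /median wxy wxz wyz.
have [v wv cvy] := connect_first_step (cE w y (in_setT _) (in_setT _)) yw.
have cvx : ~~ connect (adj (avoid E w)) v x.
  apply/negP => cvx; move: wxy; rewrite /on_path (negbTE yw) /=.
  case/orP=> [/eqP xw | /negP []].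
    move: cvx; rewrite xw connect_adjC => /avoid_isolated vw.
    by have := adj_neq gE wv; rewrite vw eqxx.
  by apply: connect_trans cvy; rewrite connect_adjC.
apply: (IHk v); last 2 first.
- exact: on_path_step tE wv cvx _ cvy.
- exact: on_path_step tE wv cvx _ (connect_trans cvy cyz).
have := proper_card (side_step_proper tE wv cvx).
have := max_card (side E v x); rewrite card_ord; lia.
Qed.

(** * Branches at a vertex *)

Definition comp E m r := [set x | (r != m) && connect (adj (avoid E m)) x r].

Definition branch_root m (o : option ('I_n * 'I_n)) := oapp fst m o.

Definition attach m (o : option ('I_n * 'I_n)) : {set {set 'I_n}} :=
  oapp (fun b => [set [set m; b.2]]) set0 o.

Lemma attach_mem m o e : e \in attach m o -> m \in e.
Proof. by case: o => [[r y]|] /=; rewrite ?inE // => /eqP ->; rewrite !inE eqxx. Qed.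

(* [Some (r, y)] encodes a branch with root [r] hanging from [m] by the edge {m, y};
   [None] encodes the empty branch, whose root defaults to [m]. *)
Definition branch_at E m r (o : option ('I_n * 'I_n)) : Prop :=
  if o is Some (r', y) then [/\ r' = r, r != m, adj E m y & connect (adj (avoid E m)) y r]
  else r = m.

Definition branch_of E m r : option ('I_n * 'I_n) :=
  if r == m then None
  else omap (pair r) [pick y | adj E m y && connect (adj (avoid E m)) y r].

Lemma branch_at_root E m r o : branch_at E m r o -> branch_root m o = r.
Proof. by case: o => [[r' y] [] | ]. Qed.

Lemma branch_at_unique S E m r o o' : is_graph_on S E -> acyclic E ->
  branch_at E m r o -> branch_at E m r o' -> o = o'.
Proof.
move=> gE acE; case: o => [[r1 y] [-> rm my cyr] | ->]; last first.
  by case: o' => [[? ?] [_ /eqP] | ].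
case: o' => [[r2 y'] [-> _ my' cy'r] | rm']; last by rewrite rm' eqxx in rm.
congr (Some (_, _)); apply: (acyclic_neighbor_unique gE acE my my').
by apply: connect_trans cyr _; rewrite connect_adjC.
Qed.

Lemma branch_ofP E m r : is_tree [set: 'I_n] E -> branch_at E m r (branch_of E m r).
Proof.
case=> _ cE _; rewrite /branch_of; have [// | rm] := eqVneq r m.
case: pickP => [y /andP [my cyr] | noy] //=.
have [y my cyr] := connect_first_step (cE m r (in_setT _) (in_setT _)) rm.
by have := noy y; rewrite my cyr.
Qed.

Lemma induced_tree S E C : is_tree S E ->
  (forall x y, x \in C -> y \in C -> connect (adj (induced E C)) x y) ->
  is_tree C (induced E C).
Proof.
case=> gE _ acE cC; split => //.
- apply/forallP => e; apply/implyP; rewrite inE => /andP [eE ->].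
  by rewrite (graph_edgeP gE eE).2.
- move=> [s /and3P [us ss cs]]; apply: acE; exists s; rewrite us ss.
  exact: sub_cycle (adj_mono (induced_sub E C)) _ cs.
Qed.

Lemma tree_connect_avoid S E' E w x y : is_tree S E' -> E' \subset E -> w \notin S ->
  x \in S -> y \in S -> connect (adj (avoid E w)) x y.
Proof.
move=> [gE' cE' _] sE'E wS xS yS; apply: connect_mono (cE' x y xS yS) => a b ab.
have /andP [aS bS] := adj_mem gE' ab.
by rewrite adj_avoid (adj_mono sE'E ab) /=; apply/andP; split; apply: contraNneq wS => <-.
Qed.

Lemma branch_edge_sub m V E o e : valid_drt (V, E, o) ->
  e \in E :|: attach m o -> e \subset m |: V.
Proof.
move=> vD; have [gE _ _] : is_tree V E by case: o vD => [[? ?]|] [].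
rewrite in_setU => /orP [eE | ]; first exact: subset_trans (graph_edgeP gE eE).1 (subsetUr _ _).
case: o vD => [[r y] [_ [_ yV]] | _] /=; rewrite inE // => /eqP ->.
by rewrite subUset !sub1set !inE eqxx yV orbT.
Qed.

Lemma attach_tree S E m V' E' o : is_tree S E -> valid_drt (V', E', o) ->
  [disjoint S & V'] -> m \in S -> is_tree (S :|: V') (E :|: (E' :|: attach m o)).
Proof.
case: o => [[r y] | ] tE [tE' vo] dS mS /=.
  by rewrite setUA; apply: glue_tree => //; case: vo.
by move: tE'; rewrite vo => /tree_set0 ->; rewrite !setU0.
Qed.

Definition core E m r r' := ~: (comp E m r :|: comp E m r').

Section Decomposition.
Variables (E : {set {set 'I_n}}) (m : 'I_n).
Hypothesis tE : is_tree [set: 'I_n] E.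

Lemma comp_closed r x y : x \in comp E m r -> connect (adj (avoid E m)) x y -> y \in comp E m r.
Proof.
rewrite !inE => /andP [-> cxr] cxy /=.
by apply: connect_trans cxr; rewrite connect_adjC.
Qed.

Lemma comp_edge r x y : adj (avoid E m) x y -> (x \in comp E m r) = (y \in comp E m r).
Proof.
move=> axy; apply/idP/idP => [xr | yr]; first exact: comp_closed xr (connect1 axy).
by apply: comp_closed yr (connect1 _); rewrite adj_sym.
Qed.

Lemma notin_comp r : m \notin comp E m r.
Proof. by rewrite inE; apply/negP => /andP [rm /avoid_isolated rE]; rewrite rE eqxx in rm. Qed.

Lemma comp_tree r : is_tree (comp E m r) (induced E (comp E m r)).
Proof.
apply: (induced_tree tE) => x y xr yr.
have cxy : connect (adj (avoid E m)) x y.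
  move: xr yr; rewrite !inE => /andP [_ cxr] /andP [_ cyr].
  by apply: connect_trans cxr _; rewrite connect_adjC.
apply: (connect_sub_on (P := fun z => z \in comp E m r) _ xr cxy) => a b ar ab.
have br : b \in comp E m r by rewrite -(comp_edge r ab).
split=> //; move: ab; rewrite adj_avoid => /andP [/andP [abE _] _].
by rewrite /adj in abE *; rewrite inE abE; apply/subsetP => c /set2P [->|->].
Qed.

Lemma on_path_notin_comp r x : on_path E m r x -> x \notin comp E m r.
Proof.
rewrite /on_path inE negb_and negbK; case/or3P => [-> // | /eqP xm | ncrx].
- rewrite xm; have [// | rm] /= := eqVneq r m.
  by apply/negP => /avoid_isolated /eqP; rewrite (negbTE rm).
- by rewrite connect_adjC ncrx orbT.
Qed.

Lemma comp_disjoint r r' : on_path E m r r' -> [disjoint comp E m r & comp E m r'].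
Proof.
move=> mrr'; rewrite -setI_eq0; apply/eqP/setP => x; rewrite !inE.
apply/negP => /andP [/andP [rm cxr] /andP [r'm cxr']].
apply/negP: (on_path_notin_comp mrr'); rewrite negbK inE rm /=.
by apply: connect_trans cxr; rewrite connect_adjC.
Qed.

Lemma branch_of_valid r : valid_drt (comp E m r, induced E (comp E m r), branch_of E m r).
Proof.
rewrite /valid_drt; split; first exact: comp_tree.
case: (branch_of E m r) (branch_ofP m r tE) => [[r' y] [-> rm my cyr] | ->].
  by rewrite !inE rm cyr connect0.
by apply/setP => x; rewrite !inE eqxx.
Qed.

Lemma attach_branch_of_sub r : attach m (branch_of E m r) \subset E.
Proof.
case: (branch_of E m r) (branch_ofP m r tE) => [[r' y] [_ _ my _] | _] /=.
  by rewrite sub1set.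
exact: sub0set.
Qed.

Lemma mem_attach_branch_of r y :
  adj E m y -> y \in comp E m r -> [set m; y] \in attach m (branch_of E m r).
Proof.
have [gE _ acE] := tE; move=> my; rewrite inE => /andP [rm cyr].
case: (branch_of E m r) (branch_ofP m r tE) => [[r' y'] [_ _ my' cy'r] | rm'] /=.
  rewrite inE; apply/eqP; congr [set m; _]; apply: (acyclic_neighbor_unique gE acE my my').
  by apply: connect_trans cyr _; rewrite connect_adjC.
by rewrite rm' eqxx in rm.
Qed.

Lemma mem_core r r' : m \in core E m r r'.
Proof. by rewrite in_setC in_setU negb_or !notin_comp. Qed.

Lemma avoid_closed_tree V : m \in V ->
  (forall t x, x \in V -> connect (adj (avoid E m)) t x -> t \in V) ->
  is_tree V (induced E V).
Proof.
have [_ cE _] := tE; move=> mV closedV.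
have edgeV a b : a \in V -> b \in V -> adj E a b -> adj (induced E V) a b.
  by move=> aV bV; rewrite /adj inE => ->; apply/subsetP => c /set2P [->|->].
suff cmx x : x \in V -> connect (adj (induced E V)) m x.
  apply: (induced_tree tE) => x y xV yV; apply: connect_trans (cmx y yV).
  by rewrite connect_adjC; apply: cmx.
move=> xV; have [-> | xm] := eqVneq x m; first exact: connect0.
have [z mz czx] := connect_first_step (cE m x (in_setT _) (in_setT _)) xm.
apply: (@connect_trans _ _ z); first by apply/connect1/edgeV; rewrite ?(closedV z x).
apply: (connect_sub_on (P := fun t => connect (adj (avoid E m)) t x) _ czx czx) => a b cax ab.
have cbx : connect (adj (avoid E m)) b x.
  by apply: connect_trans _ cax; apply: connect1; rewrite adj_sym.
split=> //; apply: edgeV; [exact: closedV xV cax | exact: closedV xV cbx |].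
by move: ab; rewrite adj_avoid => /andP [/andP []].
Qed.

Lemma core_tree r r' : is_tree (core E m r r') (induced E (core E m r r')).
Proof.
apply: avoid_closed_tree; first exact: mem_core.
move=> t x; rewrite !in_setC !in_setU !negb_or => /andP [xr xr'] ctx.
by apply/andP; split; [move: xr | move: xr']; apply: contraNN => /comp_closed; apply.
Qed.

Lemma tree_edge_decomposition r r' :
  E = induced E (core E m r r')
      :|: (induced E (comp E m r) :|: attach m (branch_of E m r))
      :|: (induced E (comp E m r') :|: attach m (branch_of E m r')).
Proof.
have [gE _ _] := tE.
apply/eqP; rewrite eqEsubset; apply/andP; split; last first.
  by rewrite !subUset !induced_sub !attach_branch_of_sub.
have mem_induced C p q : p \in C -> q \in C -> adj E p q -> [set p; q] \in induced E C.
  move=> pC qC pqE; rewrite inE; apply/andP; split; first exact: pqE.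
  by apply/subsetP => c /set2P [->|->].
have inC x : x \notin comp E m r -> x \notin comp E m r' -> x \in core E m r r'.
  by move=> xr xr'; rewrite in_setC in_setU negb_or xr xr'.
have edge_at_m q : adj E m q -> [set m; q] \in induced E (core E m r r')
      :|: (induced E (comp E m r) :|: attach m (branch_of E m r))
      :|: (induced E (comp E m r') :|: attach m (branch_of E m r')).
  move=> mq; rewrite !in_setU.
  have [qr | qr] := boolP (q \in comp E m r).
    by rewrite (mem_attach_branch_of mq qr) !orbT.
  have [qr' | qr'] := boolP (q \in comp E m r').
    by rewrite (mem_attach_branch_of mq qr') !orbT.
  by rewrite (mem_induced _ _ _ (mem_core r r') (inC q qr qr') mq).
apply/subsetP => e eE; have [_ /eqP /cards2P [p [q [pq epq]]]] := graph_edgeP gE eE.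
rewrite epq in eE *.
have [pm | pm] := eqVneq p m; first by rewrite pm; apply: edge_at_m; rewrite -pm.
have [qm | qm] := eqVneq q m; first by rewrite qm setUC; apply: edge_at_m; rewrite adj_sym -qm.
have apq : adj (avoid E m) p q by rewrite adj_avoid pm qm !andbT; exact: eE.
rewrite !in_setU.
have [pr | pr] := boolP (p \in comp E m r).
  have qr : q \in comp E m r by rewrite -(comp_edge r apq).
  by rewrite (mem_induced _ _ _ pr qr eE) !orbT.
have [pr' | pr'] := boolP (p \in comp E m r').
  have qr' : q \in comp E m r' by rewrite -(comp_edge r' apq).
  by rewrite (mem_induced _ _ _ pr' qr' eE) !orbT.
have qr : q \notin comp E m r by rewrite -(comp_edge r apq).
have qr' : q \notin comp E m r' by rewrite -(comp_edge r' apq).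
by rewrite (mem_induced _ _ _ (inC p pr pr') (inC q qr qr') eE).
Qed.

End Decomposition.

Lemma on_path_contra E w x y z : x != w -> y != w ->
  connect (adj (avoid E w)) x z -> connect (adj (avoid E w)) y z -> ~~ on_path E w x y.
Proof.
move=> xw yw cxz cyz; rewrite /on_path (negbTE xw) (negbTE yw) negbK.
by apply: connect_trans cxz _; rewrite connect_adjC.
Qed.

Section Branch.
Variables (E E' : {set {set 'I_n}}) (V' : {set 'I_n}) (m : 'I_n) (o : option ('I_n * 'I_n)).
Hypotheses (gE : is_graph_on [set: 'I_n] E) (vD : valid_drt (V', E', o)) (mV' : m \notin V')
  (sub_branch : E' :|: attach m o \subset E)
  (sep_branch : forall e, e \in E -> e \notin E' :|: attach m o -> [disjoint e & V']).

Let tE' : is_tree V' E'. Proof. by case: o vD => [[? ?]|] []. Qed.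

Lemma branch_closed x y : x \in V' -> connect (adj (avoid E m)) x y -> y \in V'.
Proof.
move=> xV'; apply: (connect_preserved (P := fun z => z \in V')) xV' => a b aV'.
rewrite adj_avoid => /andP [/andP [abE am] bm].
have [abB | abB] := boolP ([set a; b] \in E' :|: attach m o); last first.
  by have := disjointFl (sep_branch abE abB) aV'; rewrite !inE eqxx.
have := branch_edge_sub vD abB; rewrite subUset !sub1set !inE.
by rewrite (negbTE am) (negbTE bm) => /andP [].
Qed.

Lemma branch_root_cases :
  (branch_root m o = m /\ V' = set0) \/ (branch_root m o != m /\ branch_root m o \in V').
Proof.
case: o vD => [[r y] [_ [rV' _]] | [_ ->]] /=; [right | by left].
by split=> //; apply: contraNneq mV' => <-.
Qed.

Lemma comp_branch : comp E m (branch_root m o) = V'.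
Proof.
apply/setP => x; rewrite inE.
have [[-> ->] | [rm rV']] := branch_root_cases; first by rewrite eqxx inE.
rewrite rm /=; apply/idP/idP => [cxr | xV'].
  by apply: branch_closed rV' _; rewrite connect_adjC.
exact: tree_connect_avoid tE' (subset_trans (subsetUl _ _) sub_branch) mV' xV' rV'.
Qed.

Lemma induced_branch : induced E V' = E'.
Proof.
have [gE' _ _] := tE'; apply/setP => e; rewrite inE.
apply/andP/idP => [[eE eV'] | eE']; last first.
  by split; [apply: (subsetP sub_branch); rewrite inE eE' | exact: (graph_edgeP gE' eE').1].
have [_ /eqP /cards2P [p [q [_ epq]]]] := graph_edgeP gE eE.
have pV' : p \in V' by apply: (subsetP eV'); rewrite epq !inE eqxx.
have [eB | eB] := boolP (e \in E' :|: attach m o).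
  rewrite in_setU in eB; case/orP: eB => // /attach_mem me.
  by move: mV'; rewrite (subsetP eV' m me).
by have := disjointFl (sep_branch eE eB) pV'; rewrite epq !inE eqxx.
Qed.

Let sE'E : E' \subset E. Proof. exact: subset_trans (subsetUl _ _) sub_branch. Qed.

Lemma branch_at_attached : branch_at E m (branch_root m o) o.
Proof.
case: o vD sub_branch => [[r y] [_ [rV' yV']] sB | //] /=; split=> //.
- by apply: contraNneq mV' => <-.
- by apply: (subsetP sB); rewrite !inE eqxx orbT.
- exact: tree_connect_avoid tE' sE'E mV' yV' rV'.
Qed.

Lemma branch_root_connect w : w \notin V' -> w != m ->
  connect (adj (avoid E w)) (branch_root m o) m.
Proof.
case: o vD sub_branch => [[r y] [_ [rV' yV']] sB | _ _] wV' wm /=; last exact: connect0.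
apply: (@connect_trans _ _ y); first exact: tree_connect_avoid tE' sE'E wV' rV' yV'.
apply: connect1; rewrite adj_avoid adj_sym (eq_sym m) wm andbT.
apply/andP; split; first by apply: (subsetP sB); rewrite !inE eqxx orbT.
by apply: contraNneq wV' => <-.
Qed.

Lemma branch_root_neq w : w \notin V' -> w != m -> branch_root m o != w.
Proof.
move=> wV' wm; have [[-> _] | [_ rV']] := branch_root_cases; first by rewrite eq_sym.
by apply: contraNneq wV' => <-.
Qed.

End Branch.

Lemma disjoint_setUl (A B C : {set 'I_n}) :
  [disjoint A :|: B & C] = [disjoint A & C] && [disjoint B & C].
Proof. by rewrite -!setI_eq0 setIUl setU_eq0. Qed.

(** * Gluing and decoding *)

Definition median_of E x y z : 'I_n := odflt z [pick w | median E x y z w].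

Lemma median_ofP E x y z : is_tree [set: 'I_n] E -> median E x y z (median_of E x y z).
Proof.
move=> tE; rewrite /median_of; case: pickP => [w // | nomed].
by have [w] := median_exists x y z tE; rewrite nomed.
Qed.

Definition decode (t : {set {set 'I_n}} * 'I_n * 'I_n * 'I_n) :
    DRT_raw n * DRT_raw n * DRT_raw n :=
  let: (E, r1, r2, r3) := t in
  let m := median_of E r1 r2 r3 in
  let V1 := core E m r1 r2 in let V2 := comp E m r1 in let V3 := comp E m r2 in
  ((V1, induced E V1, Some (m, r3)),
   (V2, induced E V2, branch_of E m r1), (V3, induced E V3, branch_of E m r2)).

Section Glued.
Variables (V1 V2 V3 : {set 'I_n}) (E1 E2 E3 : {set {set 'I_n}}) (a1 a2 : 'I_n)
  (o2 o3 : option ('I_n * 'I_n)).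
Hypotheses (t1 : is_tree V1 E1) (a1V1 : a1 \in V1) (a2V1 : a2 \in V1)
  (v2 : valid_drt (V2, E2, o2)) (v3 : valid_drt (V3, E3, o3))
  (d12 : [disjoint V1 & V2]) (d13 : [disjoint V1 & V3]) (d23 : [disjoint V2 & V3])
  (cov : V1 :|: V2 :|: V3 = [set: 'I_n]).

Local Notation E := (E1 :|: (E2 :|: attach a1 o2) :|: (E3 :|: attach a1 o3)).

Lemma glued_tree : is_tree [set: 'I_n] E.
Proof.
rewrite -cov; apply: attach_tree v3 _ _; first exact: attach_tree.
  by rewrite disjoint_setUl d13.
by rewrite inE a1V1.
Qed.

Let gE : is_graph_on [set: 'I_n] E. Proof. by case: glued_tree. Qed.
Let a1V2 : a1 \notin V2. Proof. by rewrite (disjointFr d12 a1V1). Qed.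
Let a1V3 : a1 \notin V3. Proof. by rewrite (disjointFr d13 a1V1). Qed.

Lemma glued_edge_cases e : e \in E ->
  [\/ e \subset V1, e \in E2 :|: attach a1 o2 | e \in E3 :|: attach a1 o3].
Proof.
rewrite in_setU => /orP [| eB3]; last by constructor 3.
rewrite in_setU => /orP [eE1 | eB2]; last by constructor 2.
by constructor 1; have [gE1 _ _] := t1; exact: (graph_edgeP gE1 eE1).1.
Qed.

Let sep2 e : e \in E -> e \notin E2 :|: attach a1 o2 -> [disjoint e & V2].
Proof.
case/glued_edge_cases => [eV1 | -> // | eB3] _; first exact: disjointWl eV1 d12.
apply: disjointWl (branch_edge_sub v3 eB3) _.
by rewrite disjoint_setUl disjoints1 a1V2 disjoint_sym.
Qed.

Let sep3 e : e \in E -> e \notin E3 :|: attach a1 o3 -> [disjoint e & V3].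
Proof.
case/glued_edge_cases => [eV1 | eB2 | -> //] _; first exact: disjointWl eV1 d13.
apply: disjointWl (branch_edge_sub v2 eB2) _.
by rewrite disjoint_setUl disjoints1 a1V3.
Qed.

Let sub2 : E2 :|: attach a1 o2 \subset E.
Proof. exact: subset_trans (subsetUr E1 _) (subsetUl _ _). Qed.

Let sub3 : E3 :|: attach a1 o3 \subset E.
Proof. exact: subsetUr. Qed.

Local Notation r1 := (branch_root a1 o2).
Local Notation r2 := (branch_root a1 o3).

Lemma glued_comp2 : comp E a1 r1 = V2. Proof. exact: comp_branch v2 a1V2 sub2 sep2. Qed.
Lemma glued_comp3 : comp E a1 r2 = V3. Proof. exact: comp_branch v3 a1V3 sub3 sep3. Qed.

Lemma glued_induced2 : induced E V2 = E2.
Proof. exact: induced_branch gE v2 a1V2 sub2 sep2. Qed.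

Lemma glued_induced3 : induced E V3 = E3.
Proof. exact: induced_branch gE v3 a1V3 sub3 sep3. Qed.

Lemma glued_core : core E a1 r1 r2 = V1.
Proof.
rewrite /core glued_comp2 glued_comp3; apply/setP => x.
have := in_setT x; rewrite -cov !inE.
case: (boolP (x \in V1)) => [xV1 | _] /= => [_ | ->] //.
by rewrite (disjointFr d12 xV1) (disjointFr d13 xV1).
Qed.

Lemma glued_induced1 : induced E V1 = E1.
Proof.
have [gE1 _ _] := t1; apply/setP => e; rewrite inE.
apply/andP/idP => [[eE eV1] | eE1]; last first.
  by split; [rewrite !inE eE1 | exact: (graph_edgeP gE1 eE1).1].
have not_branch (W : {set 'I_n}) : [disjoint V1 & W] -> e \subset a1 |: W -> False.
  move=> dW eW; have : e \subset [set a1].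
    apply/subsetP => x xe; have := subsetP eW x xe.
    by rewrite !inE (disjointFr dW (subsetP eV1 x xe)) orbF.
  by move/subset_leq_card; rewrite cards1 (graph_edgeP gE eE).2.
move: eE; rewrite !in_setU -orbA => /or3P [// | eB2 | eB3].
- by case: (not_branch _ d12); apply: (branch_edge_sub v2); rewrite in_setU.
- by case: (not_branch _ d13); apply: (branch_edge_sub v3); rewrite in_setU.
Qed.

Lemma glued_branch2 : branch_of E a1 r1 = o2.
Proof.
have [gE' _ acE] := glued_tree.
exact: branch_at_unique gE' acE (branch_ofP a1 r1 glued_tree) (branch_at_attached v2 a1V2 sub2).
Qed.

Lemma glued_branch3 : branch_of E a1 r2 = o3.
Proof.
have [gE' _ acE] := glued_tree.
exact: branch_at_unique gE' acE (branch_ofP a1 r2 glued_tree) (branch_at_attached v3 a1V3 sub3).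
Qed.

Lemma glued_median_unique w : median E r1 r2 a2 w -> w = a1.
Proof.
case/and3P => w12 w1a w2a; apply/eqP/negPn/negP => wa1.
have sE1 : E1 \subset E by rewrite -setUA subsetUl.
have reach_a2 : w \notin V1 -> a2 != w /\ connect (adj (avoid E w)) a2 a1.
  move=> wV1; split; first by apply: contraNneq wV1 => <-.
  exact: tree_connect_avoid t1 sE1 wV1 a2V1 a1V1.
have := in_setT w; rewrite -cov !inE -orbA => /or3P [wV1 | wV2 | wV3].
- have wV2 : w \notin V2 by rewrite (disjointFr d12 wV1).
  have wV3 : w \notin V3 by rewrite (disjointFr d13 wV1).
  apply/negP: w12; apply: on_path_contra (branch_root_neq v2 a1V2 wV2 wa1)
    (branch_root_neq v3 a1V3 wV3 wa1) (branch_root_connect v2 sub2 wV2 wa1)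
    (branch_root_connect v3 sub3 wV3 wa1).
- have wV1 : w \notin V1 by rewrite (disjointFl d12 wV2).
  have wV3 : w \notin V3 by rewrite (disjointFr d23 wV2).
  have [a2w ca2] := reach_a2 wV1.
  apply/negP: w2a; apply: on_path_contra (branch_root_neq v3 a1V3 wV3 wa1) a2w
    (branch_root_connect v3 sub3 wV3 wa1) ca2.
- have wV1 : w \notin V1 by rewrite (disjointFl d13 wV3).
  have wV2 : w \notin V2 by rewrite (disjointFl d23 wV3).
  have [a2w ca2] := reach_a2 wV1.
  apply/negP: w1a; apply: on_path_contra (branch_root_neq v2 a1V2 wV2 wa1) a2w
    (branch_root_connect v2 sub2 wV2 wa1) ca2.
Qed.

Lemma decode_glued : decode (E, r1, r2, a2) =
  ((V1, E1, Some (a1, a2)), (V2, E2, o2), (V3, E3, o3)).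
Proof.
rewrite /decode (glued_median_unique (median_ofP r1 r2 a2 glued_tree)).
by rewrite glued_core glued_comp2 glued_comp3 glued_induced1 glued_induced2
  glued_induced3 glued_branch2 glued_branch3.
Qed.

End Glued.

Definition branch_edges m (D : DRT_raw n) := D.1.2 :|: attach m D.2.

(* [x0] only serves for an empty first tree, which [Qn] excludes. *)
Definition glue (x0 : 'I_n) (q : DRT_raw n * DRT_raw n * DRT_raw n) :
    {set {set 'I_n}} * 'I_n * 'I_n * 'I_n :=
  let: (D, D', D'') := q in
  let: (a1, a2) := odflt (x0, x0) D.2 in
  (D.1.2 :|: branch_edges a1 D' :|: branch_edges a1 D'',
   branch_root a1 D'.2, branch_root a1 D''.2, a2).

Variant Qn_spec : DRT_raw n * DRT_raw n * DRT_raw n -> Prop :=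
  QnSpec V1 V2 V3 E1 E2 E3 a1 a2 o2 o3 of is_tree V1 E1 & a1 \in V1 & a2 \in V1
    & valid_drt (V2, E2, o2) & valid_drt (V3, E3, o3)
    & [disjoint V1 & V2] & [disjoint V1 & V3] & [disjoint V2 & V3]
    & V1 :|: V2 :|: V3 = [set: 'I_n] :
  Qn_spec ((V1, E1, Some (a1, a2)), (V2, E2, o2), (V3, E3, o3)).

Lemma Qn_predP q : Qn_pred q -> Qn_spec q.
Proof.
case: q => [[[[V1 E1] [[a1 a2]|]] [[V2 E2] o2]] [[V3 E3] o3]].
  by move=> [[t1 [a1V1 a2V1]] v2 v3 [d12 d13 d23 cov] _]; constructor.
by move=> [[_ V1E] _ _ _]; rewrite /drt_vertices /= V1E eqxx.
Qed.

Lemma glue_tree_Qn x0 q : Qn_pred q -> is_tree [set: 'I_n] (glue x0 q).1.1.1.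
Proof.
case/Qn_predP => V1 V2 V3 E1 E2 E3 a1 a2 o2 o3 t1 a1V1 _ v2 v3 d12 d13 d23 cov.
exact: glued_tree t1 a1V1 v2 v3 d12 d13 d23 cov.
Qed.

Lemma decode_glue x0 q : Qn_pred q -> decode (glue x0 q) = q.
Proof.
case/Qn_predP => V1 V2 V3 E1 E2 E3 a1 a2 o2 o3 t1 a1V1 a2V1 v2 v3 d12 d13 d23 cov.
exact: decode_glued t1 a1V1 a2V1 v2 v3 d12 d13 d23 cov.
Qed.

Lemma glue_decode x0 t : is_tree [set: 'I_n] t.1.1.1 -> glue x0 (decode t) = t.
Proof.
case: t => [[[E r1] r2] r3] /= tE; set m := median_of E r1 r2 r3.
rewrite /branch_edges /= (branch_at_root (branch_ofP m r1 tE)).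
by rewrite (branch_at_root (branch_ofP m r2 tE)) -tree_edge_decomposition.
Qed.

Lemma decode_Qn t : is_tree [set: 'I_n] t.1.1.1 -> Qn_pred (decode t).
Proof.
case: t => [[[E r1] r2] r3] /= tE; set m := median_of E r1 r2 r3.
have /and3P [m12 m13 m23] := median_ofP r1 r2 r3 tE.
have r3core : r3 \in core E m r1 r2.
  by rewrite in_setC in_setU negb_or !on_path_notin_comp.
split; rewrite /drt_vertices /=.
- by split; [exact: core_tree | split; [exact: mem_core |]].
- exact: branch_of_valid.
- exact: branch_of_valid.
- split; [by rewrite disjoint_sym disjoints_subset setCK subsetUl |
    by rewrite disjoint_sym disjoints_subset setCK subsetUr | exact: comp_disjoint |].
  by rewrite -setUA setUC setUCr.
- by apply/set0Pn; exists m; apply: mem_core.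
Qed.

End Graphs.

Theorem theorem1 (n : nat) (hn : 1 <= n) :
  exists f : Qn n -> Tn n, bijective f.
Proof.
pose x0 : 'I_n := Ordinal hn.
pose f (q : Qn n) : Tn n := exist _ (glue x0 (sval q)) (glue_tree_Qn x0 (svalP q)).
pose g (t : Tn n) : Qn n := exist _ (decode (sval t)) (decode_Qn (svalP t)).
have sig_eq (A : Type) (P : A -> Prop) (u v : {x | P x}) : sval u = sval v -> u = v.
  by apply: eq_sig_hprop => x; apply: proof_irrelevance.
exists f; exists g => [q | t]; apply: sig_eq.
- exact: decode_glue (svalP q).
- exact: glue_decode (svalP t).
Qed.
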